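(* Let $G=A(n,\theta)$ with $n=2m+1\ge3$ odd, and let $C$ be a union of conjugacy classes of elements of order $4$ containing, for each conjugacy class $K$ of elements of order $4$, exactly one of $K$ and $K^{(-1)}$. Then every linear character $\lambda$ of $G$ satisfies $\lambda(C)-\overline{\lambda(C)}=0$, and for every nonlinear irreducible character $\chi$ of $G$, $\frac{\chi(C)-\overline{\chi(C)}}{\chi(1)}\in\{2^n i,-2^n i\}$. Consequently the skew adjacency matrix of $\mathrm{Cay}(G,C)$ has all its eigenvalues in $\{0,\,2^n i,\,-2^n i\}$.
   Context: Let $\mathbb{F}_{2^n}$ be the field with $2^n$ elements, $\theta$ a generator of $\mathrm{Gal}(\mathbb{F}_{2^n}/\mathbb{F}_2)$, $a^\theta$ the image of $a$ under $\theta$. $G=A(n,\theta)$ is the group of matrices $\begin{bmatrix}1&a&b\\0&1&a^\theta\\0&0&1\end{bmatrix}$, $a,b\in\mathbb{F}_{2^n}$, denoted $(a,b)$, with $(a,b)(c,d)=(a+c,\,b+d+ac^\theta)$. For $Y\subseteq G$, $Y^{(-1)}=\{y^{-1}:y\in Y\}$ and $\chi(Y)=\sum_{y\in Y}\chi(y)$. The Cayley digraph $\mathrm{Cay}(G,C)$ has vertex set $G$ and an arc from $g$ to $cg$ for each $c\in C$; its skew adjacency matrix $S$ has $(u,v)$ entry $1$ if $(u,v)$ is an arc, $-1$ if $(v,u)$ is an arc, $0$ otherwise. *)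

From HB Require Import structures.
From mathcomp Require Import all_boot all_order all_algebra all_fingroup all_solvable all_field all_character.
From mathcomp Require Import ring.
Set Implicit Arguments. Unset Strict Implicit. Unset Printing Implicit Defensive.
Import Order.TTheory GRing.Theory Num.Theory.
Local Open Scope ring_scope.

(* theta generates Gal(F / F_2): every ring (= field) automorphism of F is an
   iterate of theta.  (Every ring morphism F -> F fixes the prime field.) *)
Definition gal_generator (F : finFieldType) (th : {rmorphism F -> F}) : Prop :=
  forall f : {rmorphism F -> F}, exists k : nat, forall x, f x = iter k th x.

Definition Agrp (F : finFieldType) (th : {rmorphism F -> F}) : Type := (F * F)%type.

Section AGroup.
Variables (F : finFieldType) (th : {rmorphism F -> F}).
Local Notation Agrp := (@Agrp F th).

HB.instance Definition _ := Finite.on Agrp.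

Definition Amul (x y : Agrp) : Agrp :=
  (x.1 + y.1, x.2 + y.2 + x.1 * th y.1).
Definition Aone : Agrp := (0, 0).
Definition Ainv (x : Agrp) : Agrp := (- x.1, - x.2 + x.1 * th x.1).

Lemma AmulA : associative Amul.
Proof.
move=> [a b] [c d] [e f]; rewrite /Amul /=; congr (_, _); first by rewrite addrA.
by rewrite rmorphD /=; ring.
Qed.

Lemma Amul1 : left_id Aone Amul.
Proof. by move=> [a b]; rewrite /Amul /= !add0r mul0r addr0. Qed.

Lemma AmulV : left_inverse Aone Ainv Amul.
Proof.
move=> [a b]; rewrite /Amul /Aone /Ainv /=; congr (_, _); first by rewrite addNr.
by ring.
Qed.

HB.instance Definition _ := Finite_isGroup.Build Agrp AmulA Amul1 AmulV.

End AGroup.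

(* Skew adjacency matrix of Cay(G, C), rows/columns indexed by enum of gT.
   Arc from g to c g for c in C. *)
Definition skew_adj (gT : finGroupType) (C : {set gT}) : 'M[algC]_#|gT| :=
  \matrix_(i, j)
    (let u := enum_val i in let v := enum_val j in
     if (v * u^-1)%g \in C then 1
     else if (u * v^-1)%g \in C then -1 else 0).

(* Write f = 1_C - 1_(C^-1) and Z = {(0, b)} for the centre of G.  Since theta generates
   the Galois group and n is odd, u |-> u + u^theta maps F onto the kernel of the absolute
   trace Tr (additive Hilbert 90), so for a <> 0 the class of (a, 0) is
   {(a, t) : Tr(t / (a a^theta)) = 0} and the inverse class is the rest of the coset (a, 0) Z.
   As C picks one class of each such pair, f(a, t) = f(a, 0) (-1)^Tr(t / (a a^theta)), and the
   orthogonality of additive characters gives f * f = -4^n delta_1 + 2^n 1_Z and f * 1_Z = 0.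
   The skew adjacency matrix is the group matrix of f, so S^3 = -4^n S.  For an irreducible
   representation rho, Schur's lemma makes sum_x f(x) rho(x) a scalar c with c^2 = -4^n,
   unless rho is trivial on Z = G', i.e. linear; a linear character is constant on the fibres
   {(a, b) : b in F}, on which f sums to 0. *)

From HB Require Import structures.
From mathcomp Require Import all_boot all_order all_algebra all_fingroup all_solvable all_field all_character.
From mathcomp Require Import ring zify.
Set Implicit Arguments. Unset Strict Implicit. Unset Printing Implicit Defensive.
Import Order.TTheory GRing.Theory Num.Theory.
Local Open Scope ring_scope.

Lemma mulr_eq_Nsqr (a c : algC) : a * a = - (c * c) -> a \in [:: c * 'i; - (c * 'i)].
Proof.
move=> aa; have /eqP : (a - c * 'i) * (a + c * 'i) = 0.
  have -> : (a - c * 'i) * (a + c * 'i) = a * a - c * c * ('i * 'i) by ring.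
  by rewrite mulCii mulrN1 opprK aa addNr.
by rewrite mulf_eq0 subr_eq0 addr_eq0 !inE.
Qed.

Lemma eigenvalue_cube_Nsqr (d : nat) (A : 'M[algC]_d) (c : algC) :
  A *m A *m A = - (c * c) *: A ->
  forall a, eigenvalue A a -> a \in [:: 0; c * 'i; - (c * 'i)].
Proof.
move=> A3 a /eigenvalueP[v vA v0].
have /eqP : (a * a + c * c) * a *: v = 0.
  have vA3 : v *m (A *m A *m A) = (a * a * a) *: v.
    by rewrite !mulmxA vA -!scalemxAl vA -scalemxAl vA !scalerA.
  rewrite A3 -scalemxAr vA scalerA in vA3.
  by rewrite mulrDl scalerDl -vA3 mulNr scaleNr addNr.
rewrite scaler_eq0 (negPf v0) orbF mulf_eq0 addr_eq0 => /orP[/eqP/mulr_eq_Nsqr|].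
  by rewrite !inE => ->; rewrite orbT.
by rewrite inE => ->.
Qed.

Lemma scalar_mx_inj (R : pzRingType) (d : nat) (a b : R) :
  (0 < d)%N -> (a%:M : 'M[R]_d) = b%:M -> a = b.
Proof.
move=> d_gt0 /matrixP/(_ (Ordinal d_gt0) (Ordinal d_gt0)).
by rewrite !mxE eqxx !mulr1n.
Qed.

Section GroupAlgebra.
Variable gT : finGroupType.
Implicit Types (phi psi : gT -> algC) (C : {set gT}).

Definition convg phi psi (h : gT) : algC := \sum_(x : gT) phi x * psi (x^-1 * h)%g.

Definition group_mx phi : 'M[algC]_#|gT| :=
  \matrix_(i, j) phi (enum_val j * (enum_val i)^-1)%g.

Lemma sum_enum_val (g : gT -> algC) :
  \sum_(j < #|gT|) g (enum_val j) = \sum_(y : gT) g y.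
Proof.
rewrite [RHS](reindex (enum_val : 'I_#|gT| -> gT)) //.
exact/onW_bij/enum_val_bij.
Qed.

Lemma group_mxM phi psi : group_mx phi *m group_mx psi = group_mx (convg psi phi).
Proof.
apply/matrixP => i k; rewrite !mxE /convg.
under eq_bigr do rewrite !mxE.
rewrite (sum_enum_val (fun y => phi (y * (enum_val i)^-1)%g * psi (enum_val k * y^-1)%g)).
rewrite (reindex_inj (inj_comp (mulIg (enum_val k)) invg_inj)) /=.
by apply: eq_bigr => x _; rewrite mulrC invMg invgK mulKVg mulgA.
Qed.

Definition delta1 (h : gT) : algC := (h == 1)%g%:R.

Lemma convgDr phi psi1 psi2 (a b : algC) h :
  convg phi (fun x => a * psi1 x + b * psi2 x) h = a * convg phi psi1 h + b * convg phi psi2 h.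
Proof.
rewrite /convg !mulr_sumr -big_split; apply: eq_bigr => x _.
by rewrite mulrDr !mulrA ![phi x * _]mulrC.
Qed.

Lemma convg_delta phi h : convg phi delta1 h = phi h.
Proof.
rewrite /convg (bigD1 h) //= /delta1 mulVg eqxx mulr1 big1 ?addr0 //.
by move=> x /negbTE xh; rewrite /delta1 -(inj_eq (mulgI x)) mulKVg mulg1 eq_sym xh mulr0.
Qed.

Definition skew_indicator C (x : gT) : algC := (x \in C)%:R - (x^-1 \in C)%g%:R.

Lemma skew_indicatorV C x : skew_indicator C x^-1%g = - skew_indicator C x.
Proof. by rewrite /skew_indicator invgK opprB. Qed.

Lemma skew_adjE C : {in C, forall x, x^-1%g \notin C} ->
  skew_adj C = group_mx (skew_indicator C).
Proof.
move=> CnotV; apply/matrixP => i j; rewrite !mxE /skew_indicator.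
set y := (enum_val j * (enum_val i)^-1)%g.
have -> : (enum_val i * (enum_val j)^-1)%g = y^-1%g by rewrite /y invMg invgK.
have [yC|_] := boolP (y \in C); first by rewrite (negPf (CnotV y yC)) subr0.
by case: (y^-1%g \in C); rewrite ?(mulr1n, mulr0n, sub0r, subrr, oppr0); reflexivity.
Qed.

Lemma cfskew_sum (G : {group gT}) (i : Iirr G) C :
  \sum_(y in C) 'chi_i y - (\sum_(y in C) 'chi_i y)^* =
  \sum_(x : gT) skew_indicator C x * 'chi_i x.
Proof.
rewrite rmorph_sum /=; under [X in _ - X]eq_bigr do rewrite -irr_inv.
have -> : \sum_(y in C) 'chi_i y^-1%g = \sum_(x | x^-1%g \in C) 'chi_i x.
  by rewrite (reindex_inj invg_inj); apply: eq_bigr => x _; rewrite invgK.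
rewrite /skew_indicator; under [RHS]eq_bigr do rewrite mulrBl.
rewrite sumrB !(big_mkcond (fun x => _ \in C)) /=.
by congr (_ - _); apply: eq_bigr => x _; case: ifP; rewrite ?mul1r ?mul0r.
Qed.

Section RepresentationSum.
Variables (d : nat) (rG : mx_representation algC [set: gT]%G d).

Definition repr_sum phi : 'M_d := \sum_(x : gT) phi x *: rG x.

Lemma repr_sum_lin (a b : algC) phi psi :
  repr_sum (fun x => a * phi x + b * psi x) = a *: repr_sum phi + b *: repr_sum psi.
Proof.
rewrite /repr_sum !scaler_sumr -big_split; apply: eq_bigr => x _.
by rewrite scalerDl !scalerA.
Qed.

Lemma repr_sum_delta : repr_sum delta1 = 1%:M.
Proof.
rewrite /repr_sum (bigD1 1%g) //= /delta1 eqxx scale1r repr_mx1 big1 ?addr0 //.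
by move=> x /negbTE; rewrite /delta1 => ->; rewrite scale0r.
Qed.

Lemma repr_sumM phi psi : repr_sum phi *m repr_sum psi = repr_sum (convg phi psi).
Proof.
rewrite /repr_sum /convg mulmx_suml.
under eq_bigr => x _ do rewrite mulmx_sumr (reindex_inj (mulgI x^-1%g)) /=.
rewrite exchange_big /=; apply: eq_bigr => h _; rewrite scaler_suml.
apply: eq_bigr => x _.
by rewrite -scalemxAl -scalemxAr scalerA -repr_mxM ?inE // mulKVg.
Qed.

Lemma repr_sum_cent phi : (forall x y, phi (x ^ y)%g = phi x) ->
  centgmx rG (repr_sum phi).
Proof.
move=> phiJ; apply/centgmxP => y _; rewrite /repr_sum mulmx_suml mulmx_sumr.
under eq_bigr do rewrite -scalemxAl -repr_mxM ?inE //.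
under [RHS]eq_bigr do rewrite -scalemxAr -repr_mxM ?inE //.
rewrite [RHS](reindex_inj (conjg_inj y)) /=.
by apply: eq_bigr => x _; rewrite phiJ conjgE mulKVg.
Qed.

Lemma repr_sum_translate phi z : (forall h, phi (z * h)%g = phi h) ->
  rG z *m repr_sum phi = repr_sum phi.
Proof.
move=> phiz; rewrite /repr_sum mulmx_sumr.
under eq_bigr do rewrite -scalemxAr -repr_mxM ?inE //.
by rewrite [RHS](reindex_inj (mulgI z)); apply: eq_bigr => h _; rewrite phiz.
Qed.

End RepresentationSum.

Lemma mxtrace_repr_sum (i : Iirr [set: gT]%G) phi :
  \tr (repr_sum 'Chi_i phi) = \sum_(x : gT) phi x * 'chi_i x.
Proof.
rewrite raddf_sum; apply: eq_bigr => x _ /=.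
by rewrite mxtraceZ -irrRepr cfunE inE mulr1n.
Qed.

End GroupAlgebra.

Lemma expn2_odd_mod3 n : odd n -> (2 ^ n %% 3 = 2)%N.
Proof.
move=> on; have [k ->] : exists k, n = (2 * k + 1)%N.
  by exists n./2; rewrite -[n in LHS]odd_double_half on -mul2n addnC.
elim: k => // k IH.
have -> : (2 * k.+1 + 1 = (2 * k + 1) + 2)%N by lia.
by rewrite expnD -modnMml IH.
Qed.

Section CharTwoField.
Variables (F : finFieldType) (n : nat).
Hypothesis cardF : #|F| = (2 ^ n)%N.

Lemma char2F : 2%N \in [pchar F].
Proof. exact: card_finPcharP cardF isT. Qed.

Local Notation addxx := (addrr_pchar2 char2F).

Lemma sqrf_eq_id (x : F) : x ^+ 2 = x -> x = 0 \/ x = 1.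
Proof.
move=> xx; have /eqP : x * (x - 1) = 0 by rewrite mulrBr mulr1 -expr2 xx subrr.
by rewrite mulf_eq0 subr_eq0 => /orP[] /eqP; [left | right].
Qed.

Lemma exprD_pow2 j (x y : F) : (x + y) ^+ (2 ^ j) = x ^+ (2 ^ j) + y ^+ (2 ^ j).
Proof.
elim: j => // j IH; rewrite expnSr !exprM IH sqrrD.
by rewrite -mulr_natr (pcharf0 char2F) mulr0 addr0.
Qed.

Definition trace2 (x : F) : F := \sum_(j < n) x ^+ (2 ^ j).

Lemma trace2D x y : trace2 (x + y) = trace2 x + trace2 y.
Proof. by rewrite /trace2 -big_split; apply: eq_bigr => j _; rewrite exprD_pow2. Qed.

Lemma trace2_0 : trace2 0 = 0.
Proof. by rewrite /trace2 big1 // => j _; rewrite expr0n expn_eq0. Qed.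

Lemma trace2_sqr x : trace2 x ^+ 2 = trace2 x.
Proof.
have sqrD (y z : F) : (y + z) ^+ 2 = y ^+ 2 + z ^+ 2 by exact: (exprD_pow2 1).
rewrite /trace2 (big_morph _ sqrD (expr0n _ _)).
under eq_bigr do rewrite -exprM -expnSr.
case: n cardF => [|k] cardFk; first by rewrite !big_ord0.
have xK : x ^+ (2 ^ k.+1) = x by rewrite -cardFk expf_card.
by rewrite big_ord_recr big_ord_recl /= xK addrC.
Qed.

Lemma trace2_01 x : trace2 x = 0 \/ trace2 x = 1.
Proof. exact/sqrf_eq_id/trace2_sqr. Qed.

Lemma trace2_rmorph (f : {rmorphism F -> F}) x : trace2 (f x) = trace2 x.
Proof.
have <- : f (trace2 x) = trace2 (f x).
  by rewrite rmorph_sum; apply: eq_bigr => j _; rewrite rmorphXn.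
by case: (trace2_01 x) => ->; rewrite ?rmorph0 ?rmorph1.
Qed.

Hypothesis odd_n : odd n.

Lemma trace2_1 : trace2 1 = 1.
Proof.
rewrite /trace2; under eq_bigr do rewrite expr1n.
rewrite sumr_const card_ord -[n]odd_double_half odd_n mulrnDr -mul2n mulrnA.
by rewrite -[1 *+ 2]mulr_natr (pcharf0 char2F) mulr0 mul0rn addr0.
Qed.

Definition addchar (v t : F) : algC := if trace2 (v * t) == 0 then 1 else -1.

Lemma addcharDr v s t : addchar v (s + t) = addchar v s * addchar v t.
Proof.
rewrite /addchar mulrDr trace2D.
by case: (trace2_01 (v * s)) => ->; case: (trace2_01 (v * t)) => ->;
  rewrite ?addr0 ?add0r ?addxx ?eqxx ?oner_eq0 ?mulrNN ?mulr1 ?mul1r.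
Qed.

Lemma addcharC v t : addchar v t = addchar t v.
Proof. by rewrite /addchar mulrC. Qed.

Lemma addcharDl v v' t : addchar (v + v') t = addchar v t * addchar v' t.
Proof. by rewrite !(addcharC _ t) addcharDr. Qed.

Lemma addchar0l t : addchar 0 t = 1.
Proof. by rewrite /addchar mul0r trace2_0 eqxx. Qed.

Lemma addchar_sum v : \sum_(t : F) addchar v t = if v == 0 then #|F|%:R else 0.
Proof.
have [->|v0] := eqVneq v 0; first by under eq_bigr do rewrite addchar0l; rewrite sumr_const.
set S := \sum_t _; have SN : S = - S.
  rewrite {1}/S (reindex_inj (addIr v^-1)) /= -sumrN; apply: eq_bigr => t _.
  by rewrite addcharDr /addchar mulfV // trace2_1 oner_eq0 mulrN1.
by move/eqP: SN; rewrite -subr_eq0 opprK -mulr2n -mulr_natr mulf_eq0 pnatr_eq0 orbF => /eqP.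
Qed.

Lemma expr3_eq1 (u : F) : u ^+ 3 = 1 -> u = 1.
Proof.
move=> u3; have u0 : u != 0.
  by apply/eqP => u0; move: u3; rewrite u0 expr0n => /eqP; rewrite eq_sym oner_eq0.
have := expf_card u; rewrite cardF (divn_eq (2 ^ n) 3) expn2_odd_mod3 //.
rewrite exprD exprM exprAC u3 expr1n mul1r expr2.
by rewrite -[X in _ = X -> _]mul1r => /(mulIf u0).
Qed.

Variable th : {rmorphism F -> F}.
Hypothesis th_gen : gal_generator th.

Lemma frobenius_iter_th : exists k, forall x : F, x ^+ 2 = iter k th x.
Proof. by have [k kE] := th_gen (pFrobenius_aut char2F); exists k => x; rewrite -kE. Qed.

Lemma fixed_th_01 x : th x = x -> x = 0 \/ x = 1.
Proof.
move=> thx; have [k kE] := frobenius_iter_th; apply: sqrf_eq_id.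
by rewrite kE; elim: k {kE} => //= k ->.
Qed.

(* The Frobenius map is a power of th, so u^2 = u^(+-1); and F has no cube root of unity
   other than 1 because n is odd. *)
Lemma mul_th_eq1 u : u * th u = 1 -> u = 1.
Proof.
move=> uth; have u0 : u != 0.
  by apply/eqP => u0; move: uth; rewrite u0 mul0r => /eqP; rewrite eq_sym oner_eq0.
have thu : th u = u^-1 by rewrite -[th u]mul1r -(mulVf u0) -mulrA uth mulr1.
have iterE j : iter j th u = if odd j then u^-1 else u.
  by elim: j => //= j ->; case: (odd j) => //=; rewrite fmorphV thu invrK.
have [k kE] := frobenius_iter_th; move: (kE u); rewrite iterE; case: (odd k) => u2.
  by apply: expr3_eq1; rewrite exprS u2 mulfV.
by apply: (mulIf u0); rewrite mul1r -expr2.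
Qed.

Lemma trace2_eq0_th t : trace2 t = 0 -> exists u, u + th u = t.
Proof.
move=> t0; pose H := [set x : F | trace2 x == 0]; pose phi u := u + th u.
have phiH : phi @: H \subset H.
  apply/subsetP => _ /imsetP[u _ ->].
  by rewrite inE /phi trace2D trace2_rmorph addxx.
have phi_inj : {in H &, injective phi}.
  (* the kernel of phi is F_2, which meets ker trace2 only in 0 as trace2 1 = 1 *)
  move=> u v; rewrite !inE /phi => /eqP u0 /eqP v0 e.
  have : th (u + v) = u + v.
    apply/eqP; rewrite rmorphD -subr_eq0 (oppr_pchar2 char2F).
    have -> : th u + th v + (u + v) = (u + th u) + (v + th v) by ring.
    by rewrite e addxx.
  case/fixed_th_01 => [|uv1]; first by move/eqP; rewrite addr_eq0 (oppr_pchar2 char2F) => /eqP.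
  by move: (trace2D u v); rewrite uv1 trace2_1 u0 v0 addr0 => /eqP; rewrite oner_eq0.
have phiHE : phi @: H = H by apply/eqP; rewrite eqEcard phiH (card_in_imset phi_inj) leqnn.
have : t \in phi @: H by rewrite phiHE inE t0.
by case/imsetP => u _ ->; exists u.
Qed.

Lemma trace2_ker_neq0 : (1 < n)%N -> exists2 v : F, v != 0 & trace2 v = 0.
Proof.
move=> n_gt1; have [u _] : exists2 u : F, u \in [set: F] & u \notin [set 0; 1].
  apply/subsetPn; apply: contraTN n_gt1 => /subset_leq_card.
  rewrite cardsT cards2 cardF -(ltn_exp2l 1 n (isT : 1 < 2)%N) -leqNgt.
  by move/leq_trans; apply; rewrite expn1 ltnS leq_b1.
rewrite !inE negb_or => /andP[u0 u1]; exists (u + th u).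
  apply: contraNneq u0 => v0; have thu : th u = u.
    by rewrite -[th u]add0r -v0 -addrA addxx addr0.
  by case/fixed_th_01: thu => [->|u_1] //; rewrite u_1 eqxx in u1.
by rewrite trace2D trace2_rmorph addxx.
Qed.

Definition inv_normth (a : F) : F := (a * th a)^-1.

Lemma inv_normth_eq0 a : (inv_normth a == 0) = (a == 0).
Proof. by rewrite invr_eq0 mulf_eq0 fmorph_eq0 orbb. Qed.

Lemma mul_inv_normth a : a != 0 -> inv_normth a * (a * th a) = 1.
Proof. by move=> a0; rewrite mulVf // mulf_neq0 ?fmorph_eq0. Qed.

Lemma inv_normth_inj : injective inv_normth.
Proof.
have key a b : b != 0 -> a * th a = b * th b -> a = b.
  move=> b0 e; have : (a / b) * th (a / b) = 1.
    by rewrite fmorph_div mulrACA -invfM -e mulfV // e mulf_neq0 ?fmorph_eq0.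
  by move/mul_th_eq1/(congr1 (fun x => x * b)); rewrite divfK // mul1r.
move=> a b /invr_inj e; have [b0|b0] := eqVneq b 0; last exact: key.
have [a0|a0] := eqVneq a 0; first by rewrite a0 b0.
by symmetry; apply: key.
Qed.

End CharTwoField.

Section AGroup.
Variables (F : finFieldType) (n : nat) (th : {rmorphism F -> F}).
Hypotheses (cardF : #|F| = (2 ^ n)%N) (odd_n : odd n) (th_gen : gal_generator th).
Local Notation gT := (Agrp th).
Local Notation addxx := (addrr_pchar2 (char2F cardF)).
Local Notation oppF := (oppr_pchar2 (char2F cardF)).
Local Notation w := (inv_normth th).
Local Notation N := (#|F|%:R : algC).

Lemma mulAE (x y : gT) : (x * y)%g = (x.1 + y.1, x.2 + y.2 + x.1 * th y.1).
Proof. by []. Qed.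

Lemma invAE (x : gT) : x^-1%g = (- x.1, - x.2 + x.1 * th x.1).
Proof. by []. Qed.

Lemma oneAE : (1 : gT)%g = (0, 0).
Proof. by []. Qed.

Lemma conjAE (x y : gT) : (x ^ y)%g = (x.1, x.2 - y.1 * th x.1 + x.1 * th y.1).
Proof. by rewrite conjgE !mulAE invAE /=; congr (_, _); rewrite ?rmorphD ?rmorphN; ring. Qed.

Lemma commAE (x y : gT) : [~ x, y]%g = (0, x.1 * th y.1 - y.1 * th x.1).
Proof. by rewrite /commg conjAE mulAE invAE /=; congr (_, _); ring. Qed.

Lemma expgA2 (x : gT) : (x ^+ 2)%g = (0, x.1 * th x.1).
Proof. by rewrite expgS expg1 mulAE !addxx add0r. Qed.

Lemma orderA_eq4 (x : gT) : (#[x]%g == 4)%N = (x.1 != 0).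
Proof.
have x2E : (x ^+ 2 == 1)%g = (x.1 == 0).
  by rewrite expgA2 oneAE xpair_eqE eqxx mulf_eq0 fmorph_eq0 orbb.
have x4 : (#[x]%g %| 4)%N by rewrite order_dvdn (expgM x 2 2) !expgA2 mul0r.
have [x0|x0] := eqVneq x.1 0.
  have x2 : (#[x]%g %| 2)%N by rewrite order_dvdn x2E x0.
  by apply/negbTE/eqP => x_4; move: x2; rewrite x_4.
have : ~~ (#[x]%g %| 2)%N by rewrite order_dvdn x2E.
by move: x4; case: #[x]%g => [|[|[|[|[|k]]]]] // /dvdn_leq; lia.
Qed.

Lemma conjA_shift (a t : F) : a != 0 -> trace2 n (w a * t) = 0 ->
  exists y : gT, ((a, t) : gT) = (((a, 0) : gT) ^ y)%g.
Proof.
move=> a0 /(trace2_eq0_th cardF odd_n th_gen)[u uE]; exists (a * u, 0).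
rewrite conjAE /= rmorphM sub0r oppF; congr (_, _).
have -> : a * u * th a + a * (th a * th u) = (a * th a) * (u + th u) by ring.
by rewrite uE mulrA [_ * w a]mulrC mul_inv_normth ?mul1r.
Qed.

Lemma centerA_sub_der1 (t : F) : (1 < n)%N -> ((0, t) : gT) \in [set: gT]^`(1)%g.
Proof.
move=> n_gt1; have [->|t0] := eqVneq t 0; first exact: group1.
have [v v0 trv] := trace2_ker_neq0 cardF th_gen n_gt1.
have [a wa] : exists a, w a = v / t.
  have [winv _ winvK] := injF_bij (inv_normth_inj cardF odd_n th_gen).
  by exists (winv (v / t)).
have a0 : a != 0 by rewrite -(inv_normth_eq0 th) wa mulf_neq0 ?invr_neq0.
have [y ay] : exists y : gT, ((a, t) : gT) = (((a, 0) : gT) ^ y)%g.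
  by apply: conjA_shift; rewrite // wa divfK.
have -> : ((0, t) : gT) = [~ ((a, 0) : gT), y]%g.
  by rewrite /commg -ay mulAE invAE /=; congr (_, _); ring.
by apply: mem_commg; rewrite inE.
Qed.

Definition center_ind (x : gT) : algC := (x.1 == 0)%:R.

Lemma sumA_pair (g : gT -> algC) : \sum_(x : gT) g x = \sum_(a : F) \sum_(b : F) g (a, b).
Proof. by rewrite pair_big; apply: eq_bigr => -[]. Qed.

Variable C : {set gT}.
Hypotheses (C_order4 : {in C, forall x, #[x]%g = 4%N})
  (C_classes : {in C, forall x, (x ^: [set: gT] \subset C)%g})
  (C_skew : forall x : gT, #[x]%g = 4%N ->
     ((x ^: [set: gT])%g \subset C) (+) (((x ^: [set: gT])^-1)%g \subset C)).
Local Notation fC := (skew_indicator C).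

Lemma memC_neq0 (x : gT) : x \in C -> x.1 != 0.
Proof. by move=> xC; rewrite -orderA_eq4 C_order4. Qed.

Lemma memCJ (x y : gT) : ((x ^ y)%g \in C) = (x \in C).
Proof.
apply/idP/idP => [xyC|xC].
  by rewrite -(conjgK y x); apply: (subsetP (C_classes xyC)); rewrite memJ_class ?inE.
by apply: (subsetP (C_classes xC)); rewrite memJ_class ?inE.
Qed.

Lemma class_subC (x : gT) : ((x ^: [set: gT])%g \subset C) = (x \in C).
Proof.
apply/idP/idP => [/subsetP KC|/C_classes //].
by apply: KC; exact: class_refl.
Qed.

Lemma classV_subC (x : gT) : (((x ^: [set: gT])^-1)%g \subset C) = (x^-1%g \in C).
Proof.
apply/idP/idP => [/subsetP KC|xVC]; first by apply: KC; rewrite inE invgK class_refl.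
by apply/subsetP => y; rewrite inE => /imsetP[z _ yVE]; rewrite -[y]invgK yVE -conjVg memCJ.
Qed.

Lemma memC_xorV (x : gT) : x.1 != 0 -> (x \in C) (+) (x^-1%g \in C).
Proof.
rewrite -orderA_eq4 => /eqP /C_skew C_xor.
by rewrite class_subC classV_subC in C_xor.
Qed.

Lemma memC_notV : {in C, forall x, x^-1%g \notin C}.
Proof. by move=> x xC; have := memC_xorV (memC_neq0 xC); rewrite xC. Qed.

Lemma fCJ (x y : gT) : fC (x ^ y)%g = fC x.
Proof. by rewrite /skew_indicator -conjVg !memCJ. Qed.

Lemma fC_center (x : gT) : x.1 = 0 -> fC x = 0.
Proof.
move=> x0; rewrite /skew_indicator.
have /negbTE-> : x \notin C by apply/negP => /memC_neq0; rewrite x0 eqxx.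
have /negbTE-> : x^-1%g \notin C by apply/negP => /memC_neq0; rewrite invAE /= x0 oppr0 eqxx.
by rewrite subrr.
Qed.

Lemma fC_sqr (x : gT) : x.1 != 0 -> fC x * fC x = 1.
Proof.
move/memC_xorV; rewrite /skew_indicator.
by case: (x \in C); case: (_ \in C) => //= _; rewrite ?subr0 ?sub0r ?mulrNN mulr1.
Qed.

Lemma fC_pair a t : fC (a, t) = fC (a, 0) * addchar n (w a) t.
Proof.
have [->|a0] := eqVneq a 0; first by rewrite !fC_center ?mul0r.
rewrite /addchar; case: (trace2_01 cardF (w a * t)) => trE; rewrite trE ?eqxx ?oner_eq0.
  by have [y ->] := conjA_shift a0 trE; rewrite fCJ mulr1.
have -> : ((a, t) : gT) = (((a, t + a * th a) : gT)^-1)%g.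
  by rewrite invAE /= !oppF -addrA addxx addr0.
rewrite skew_indicatorV mulrN1; congr (- _).
have tr0 : trace2 n (w a * (t + a * th a)) = 0.
  by rewrite mulrDr (trace2D cardF) trE mul_inv_normth // (trace2_1 cardF odd_n) addxx.
by have [y ->] := conjA_shift a0 tr0; rewrite fCJ.
Qed.

Lemma sum_fC_fibre a : \sum_(b : F) fC (a, b) = 0.
Proof.
have [->|a0] := eqVneq a 0; first by rewrite big1 // => b _; rewrite fC_center.
under eq_bigr do rewrite fC_pair.
by rewrite -mulr_sumr (addchar_sum cardF odd_n) inv_normth_eq0 (negPf a0) mulr0.
Qed.

Lemma convg_fC_center (h : gT) : convg fC center_ind h = 0.
Proof.
rewrite /convg sumA_pair; apply: big1 => a _.
under eq_bigr => b _ do rewrite /center_ind mulAE invAE /=.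
by rewrite -mulr_suml sum_fC_fibre mul0r.
Qed.

Lemma invA_mul (a b p q : F) :
  ((((a, b) : gT)^-1) * ((p, q) : gT))%g = (p + a, b + (q + a * th a + a * th p)).
Proof. by rewrite mulAE invAE /= !oppF; congr (_, _); ring. Qed.

Lemma fC_mul_invA (a b p q : F) :
  fC (a, b) * fC ((((a, b) : gT)^-1) * ((p, q) : gT))%g =
  fC (a, 0) * fC (p + a, 0) * addchar n (w (p + a)) (q + a * th a + a * th p)
  * addchar n (w a + w (p + a)) b.
Proof.
rewrite invA_mul fC_pair [fC (p + a, _)]fC_pair (addcharDr cardF) (addcharDl cardF).
by ring.
Qed.

Lemma addchar_inv_normth a : a != 0 -> addchar n (w a) (a * th a) = -1.
Proof.
by move=> a0; rewrite /addchar mul_inv_normth // (trace2_1 cardF odd_n) oner_eq0.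
Qed.

Lemma convg_fC_fC (h : gT) :
  convg fC fC h = - (N * N) * delta1 h + N * center_ind h.
Proof.
have w_inj := inv_normth_inj cardF odd_n th_gen.
case: h => p q; rewrite /convg sumA_pair /delta1 /center_ind oneAE xpair_eqE /=.
have wE a : (w a + w (p + a) == 0) = (p == 0).
  by rewrite addr_eq0 oppF (inj_eq w_inj) eq_sym -subr_eq0 addrK.
under eq_bigr => a _ do under eq_bigr => b _ do rewrite fC_mul_invA.
under eq_bigr => a _ do rewrite -mulr_sumr (addchar_sum cardF odd_n) wE.
have [->|p0] /= := eqVneq p 0; last by rewrite big1 ?mulr0 ?addr0 // => a _; rewrite mulr0.
have termE a : fC (a, 0) * fC (0 + a, 0) * addchar n (w (0 + a)) (q + a * th a + a * th 0)
    = - addchar n (w a) q + (a == 0)%:R * addchar n (w a) q.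
  rewrite add0r rmorph0 mulr0 addr0; have [->|a0] := eqVneq a 0.
    by rewrite !fC_center // !mul0r mul1r addNr.
  by rewrite fC_sqr // (addcharDr cardF) addchar_inv_normth // mul1r mul0r addr0 mulrN1.
under eq_bigr do rewrite termE.
rewrite -mulr_suml big_split sumrN /= [X in _ + X](bigD1 0) //= eqxx mul1r.
rewrite [X in _ + (_ + X)]big1 ?addr0; last first.
  by move=> a a0; rewrite (negPf a0) mul0r.
have -> : \sum_a addchar n (w a) q = \sum_v addchar n q v.
  by rewrite [RHS](reindex_inj w_inj); apply: eq_bigr => v _; rewrite addcharC.
have w0 : w 0 = 0 by apply/eqP; rewrite inv_normth_eq0.
rewrite w0 addchar0l.
by rewrite (addchar_sum cardF odd_n); case: (q == 0) => /=; ring.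
Qed.

Lemma convg_fC_cube (h : gT) : convg fC (convg fC fC) h = - (N * N) * fC h.
Proof.
transitivity (convg fC (fun x => - (N * N) * delta1 x + N * center_ind x) h).
  by apply: eq_bigr => x _; rewrite convg_fC_fC.
by rewrite convgDr convg_delta convg_fC_center mulr0 addr0.
Qed.

Lemma skew_adj_cube : skew_adj C *m skew_adj C *m skew_adj C = - (N * N) *: skew_adj C.
Proof.
rewrite skew_adjE; last exact: memC_notV.
by rewrite !group_mxM; apply/matrixP => i j; rewrite !mxE convg_fC_cube.
Qed.

Local Notation G := [set: gT]%G.

Lemma skew_char_linear (i : Iirr G) : (1 < n)%N -> 'chi_i \is a linear_char ->
  \sum_(x : gT) fC x * 'chi_i x = 0.
Proof.
move=> n_gt1; rewrite lin_irr_der1 => /subsetP der1_ker.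
rewrite sumA_pair big1 // => a _.
transitivity (\sum_(b : F) fC (a, b) * 'chi_i ((a, 0) : gT)).
  apply: eq_bigr => b _; congr (_ * _).
  have -> : ((a, b) : gT) = (((a, 0) : gT) * ((0, b) : gT))%g.
    by rewrite mulAE /= add0r addr0 rmorph0 mulr0 addr0.
  by rewrite cfkerMr // der1_ker // centerA_sub_der1.
by rewrite -mulr_suml sum_fC_fibre mul0r.
Qed.

Lemma linear_char_of_center_ker (i : Iirr G) :
  (forall z : gT, z.1 = 0 -> 'Chi_i z = 1%:M) -> 'chi_i \is a linear_char.
Proof.
move=> Z_ker; rewrite lin_irr_der1 -irrRepr cfker_repr derg1 /commutator gen_subG.
apply/subsetP => _ /imset2P[x y _ _ ->]; apply/rkerP; split; first by rewrite inE.
by apply: Z_ker; rewrite commAE.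
Qed.

Lemma skew_char_nonlinear (i : Iirr G) : ~~ ('chi_i \is a linear_char) ->
  exists2 c, repr_sum 'Chi_i fC = c%:M & c * c = - (N * N).
Proof.
move=> nonlin; set M := repr_sum 'Chi_i fC; set P := repr_sum 'Chi_i center_ind.
have N0 : N != 0 by rewrite pnatr_eq0 cardF expn_eq0.
have [c Mc] : exists c, M = c%:M.
  apply/is_scalar_mxP; apply: mx_abs_irr_cent_scalar (repr_sum_cent _ fCJ).
  exact/groupC/socle_irr.
have MM : M *m M = - (N * N) *: 1%:M + N *: P.
  rewrite repr_sumM -(repr_sum_delta 'Chi_i) -repr_sum_lin.
  by apply: eq_bigr => x _; rewrite convg_fC_fC.
have MP : M *m P = 0.
  by rewrite repr_sumM /repr_sum big1 // => x _; rewrite convg_fC_center scale0r.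
(* If c = 0 then P is a nonzero scalar fixed by the centre, so the centre, which contains the
   derived subgroup, acts trivially. *)
have c0 : c != 0.
  apply: contra nonlin => /eqP c0; apply: linear_char_of_center_ker => z z0.
  have P1 : P = N *: 1%:M.
    apply: (scalerI N0); rewrite scalerA -[N *: P](addKr (- (N * N) *: 1%:M)) -MM.
    by rewrite Mc c0 mul_scalar_mx scale0r addr0 scaleNr opprK.
  have := repr_sum_translate 'Chi_i (phi := center_ind) (z := z).
  rewrite -/P P1 -scalemxAr mulmx1 => /(_ _)/(scalerI N0)-> // h.
  by rewrite /center_ind mulAE /= z0 add0r.
exists c => //; have P0 : P = 0.
  by apply: (scalerI c0); rewrite -mul_scalar_mx -Mc MP scaler0.
apply: (@scalar_mx_inj _ _ _ _ (irr_degree_gt0 (socle_of_Iirr i))).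
by rewrite scalar_mxM -Mc MM P0 scaler0 addr0 scalemx1.
Qed.

End AGroup.

Unset Implicit Arguments.

Theorem mainTheorem14 (F : finFieldType) (n m : nat) (th : {rmorphism F -> F})
  (C : {set (@Agrp F th)}) :
  #|F| = (2 ^ n)%N -> n = (2 * m + 1)%N -> (3 <= n)%N ->
  gal_generator th ->
  (* C consists of elements of order 4 and is a union of conjugacy classes *)
  {in C, forall x, #[x]%g = 4%N} ->
  {in C, forall x, (x ^: [set: (@Agrp F th)] \subset C)%g} ->
  (* for each class K of elements of order 4, C contains exactly one of K, K^(-1) *)
  (forall x : (@Agrp F th), #[x]%g = 4%N ->
     ((x ^: [set: (@Agrp F th)])%g \subset C) (+) (((x ^: [set: (@Agrp F th)])^-1)%g \subset C)) ->
  let G := [set: (@Agrp F th)]%G in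
  let chiC (i : Iirr G) := \sum_(y in C) 'chi[G]_i y in
  (forall i : Iirr G, 'chi[G]_i \is a linear_char -> chiC i - (chiC i)^* = 0)
  /\ (forall i : Iirr G, 'chi[G]_i \isn't a linear_char ->
        (chiC i - (chiC i)^*) / 'chi[G]_i 1%g \in [:: 2%:R ^+ n * 'i; - (2%:R ^+ n * 'i)])
  /\ (forall a : algC, eigenvalue (skew_adj C) a ->
        a \in [:: 0; 2%:R ^+ n * 'i; - (2%:R ^+ n * 'i)]).
Proof.
move=> cardF n_def n_ge3 th_gen C_order4 C_classes C_skew G chiC.
have odd_n : odd n by rewrite n_def oddD oddM.
have N_E : #|F|%:R = 2%:R ^+ n :> algC by rewrite cardF natrX.
split; [|split] => [i lin_i | i nonlin_i | a].
- rewrite /chiC cfskew_sum (skew_char_linear cardF odd_n th_gen C_order4 C_classes) //.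
  exact: leq_trans n_ge3.
- have [c Mc cc] := skew_char_nonlinear cardF odd_n th_gen C_order4 C_classes C_skew nonlin_i.
  rewrite /chiC cfskew_sum -mxtrace_repr_sum Mc mxtrace_scalar irr1_degree.
  rewrite -[c *+ _]mulr_natr.
  by rewrite mulfK ?pnatr_eq0 -?lt0n ?irr_degree_gt0 // -N_E; exact: mulr_eq_Nsqr.
- rewrite -N_E; apply: eigenvalue_cube_Nsqr.
  exact (skew_adj_cube cardF odd_n th_gen C_order4 C_classes C_skew).
Qed.
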